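(* Let $K$ be a compact metric space, let $\mathcal U$ be an ultrafilter on a set $I$, and let $(M_i)_{i\in I}$ be a family of uniformly bounded pointed metric spaces. If there exists an algebra isomorphism between $(\mathrm{Lip}_0(M_i))_{\mathcal U}$ and $\mathrm{Lip}_0(K)$, then the metric ultraproduct $(M_i)_{\mathcal U}$ is biLipschitz equivalent to a subset of $K$.
   Context: For a pointed metric space $M$, $\mathrm{Lip}_0(M)$ is the Banach space of real Lipschitz functions vanishing at the base point, normed by the Lipschitz constant; for bounded $M$ it is an algebra under pointwise multiplication. $(\mathrm{Lip}_0(M_i))_{\mathcal U}$ denotes the Banach space ultraproduct (norm $\lim_{\mathcal U}\|f_i\|$) with coordinatewise multiplication; an algebra isomorphism is a bounded linear bijection with bounded inverse that preserves products. Metric ultraproduct: with distinguished points $0_i\in M_i$, $\ell_\infty(M_i)=\{(x_i)\in\prod_iM_i:\sup_id_i(x_i,0_i)<\infty\}$ with pseudometric $\lim_{\mathcal U,i}d_i(x_i,y_i)$; $(M_i)_{\mathcal U}$ is the metric quotient identifying points at distance $0$ (for uniformly bounded $M_i$ it does not depend on the distinguished points). *)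

From Stdlib Require List.
From mathcomp Require Import all_boot all_order all_algebra.
From mathcomp Require Import boolp classical_sets reals.
Set Implicit Arguments.
Unset Strict Implicit.
Unset Printing Implicit Defensive.
Import Order.TTheory GRing.Theory Num.Theory.
Local Open Scope ring_scope.
Local Open Scope classical_set_scope.

Section Defs.
Variable R : realType.

Definition is_metric (T : Type) (d : T -> T -> R) : Prop :=
  (forall x y, d x y = 0 <-> x = y) /\
  (forall x y, d x y = d y x) /\
  (forall x y z, d x z <= d x y + d y z).

Definition mopen (T : Type) (d : T -> T -> R) (A : set T) : Prop :=
  forall x, A x -> exists r : R, 0 < r /\ forall y, d x y < r -> A y.

Definition mcompact (T : Type) (d : T -> T -> R) : Prop :=
  forall (J : Type) (U : J -> set T),
    (forall j, mopen d (U j)) -> (forall x, exists j, U j x) ->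
    exists s : list J, forall x, exists j, List.In j s /\ U j x.

Definition lipschitz (T : Type) (d : T -> T -> R) (f : T -> R) : Prop :=
  exists L : R, forall x y, `|f x - f y| <= L * d x y.

Definition Lip0 (T : Type) (d : T -> T -> R) (p : T) (f : T -> R) : Prop :=
  f p = 0 /\ lipschitz d f.

(* Lipschitz constant (norm of Lip_0); sup of the empty set is 0 *)
Definition lipnorm (T : Type) (d : T -> T -> R) (f : T -> R) : R :=
  sup [set r | exists x y, x <> y /\ r = `|f x - f y| / d x y].

Definition is_ultrafilter (I : Type) (U : set (set I)) : Prop :=
  ~ U set0 /\ U setT /\
  (forall A B, U A -> A `<=` B -> U B) /\
  (forall A B, U A -> U B -> U (A `&` B)) /\
  (forall A, U A \/ U (~` A)).

Definition ulim (I : Type) (U : set (set I)) (a : I -> R) (L : R) : Prop :=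
  forall e : R, 0 < e -> U [set i | `|a i - L| < e].

(* representatives of elements of the ultraproduct (Lip_0(M_i))_U:
   families of Lip_0 functions with uniformly bounded norms *)
Definition in_Lip_ultraproduct (I : Type) (M : I -> Type)
    (d : forall i, M i -> M i -> R) (p : forall i, M i)
    (f : forall i, M i -> R) : Prop :=
  (forall i, Lip0 (d i) (p i) (f i)) /\
  exists B : R, forall i, lipnorm (d i) (f i) <= B.

(* An algebra isomorphism (Lip_0(M_i))_U -> Lip_0(K), given on representatives:
   T is linear and multiplicative (coordinatewise operations), onto Lip_0(K),
   and c * ||f||_U <= ||T f|| <= C * ||f||_U with ||f||_U = lim_U ||f_i||.
   (The two-sided bound makes T well defined and injective on the quotient
   by the null families, and gives boundedness of T and of its inverse.) *)
Definition lip_ultraproduct_algebra_iso (I : Type) (U : set (set I))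
    (M : I -> Type) (d : forall i, M i -> M i -> R) (p : forall i, M i)
    (K : Type) (dK : K -> K -> R) (k0 : K)
    (T : (forall i, M i -> R) -> (K -> R)) : Prop :=
  let UP := in_Lip_ultraproduct d p in
  (forall f, UP f -> Lip0 dK k0 (T f)) /\
  (forall f g, UP f -> UP g ->
      T (fun i x => f i x + g i x) = (fun k => T f k + T g k)) /\
  (forall (c : R) f, UP f -> T (fun i x => c * f i x) = (fun k => c * T f k)) /\
  (forall f g, UP f -> UP g ->
      T (fun i x => f i x * g i x) = (fun k => T f k * T g k)) /\
  (forall h, Lip0 dK k0 h -> exists f, UP f /\ T f = h) /\
  (exists c C : R, 0 < c /\ 0 < C /\
     forall f, UP f -> forall L, ulim U (fun i => lipnorm (d i) (f i)) L ->
       c * L <= lipnorm dK (T f) /\ lipnorm dK (T f) <= C * L).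

End Defs.

From mathcomp Require Import all_boot all_order all_algebra.
From mathcomp Require Import boolp classical_sets reals.
From mathcomp Require Import ring lra.
Import Order.TTheory GRing.Theory Num.Theory.
Local Open Scope ring_scope.
Local Open Scope classical_set_scope.
Set Implicit Arguments.
Unset Strict Implicit.
Unset Printing Implicit Defensive.

(* A point x of the product of the M_i defines, through the isomorphism T, the
   multiplicative functional h |-> lim_U f_i (x_i) (for any f with T f = h) on
   Lip_0(K); it is well defined because T f = 0 forces lim_U ||f_i|| = 0.
   On Lip_0(K), K compact, every such character is a point evaluation: if it
   kills d(., k0) it kills h^4 = d(., k0)^2 * (h^4 / d(., k0)^2) for every h,
   the quotient being Lipschitz; otherwise, if it were no evaluation, a finite
   subcover of K would give a sum of squares G in its kernel with
   G >= c d(., k0)^2, and factoring d(., k0)^4 through G is a contradiction.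
   With phi x the evaluation point, testing T against d_i(., y_i) and
   T^-1 against dK(., phi y) gives the two biLipschitz bounds. *)

Section Metric.
Variables (R : realType) (T : Type) (d : T -> T -> R).
Hypothesis hd : is_metric d.

Lemma metric_xx x : d x x = 0.
Proof. by case: hd => h _; apply/(h x x). Qed.

Lemma metric_sym x y : d x y = d y x.
Proof. by case: hd => _ []. Qed.

Lemma metric_triangle x y z : d x z <= d x y + d y z.
Proof. by case: hd => _ [_]. Qed.

Lemma metric_ge0 x y : 0 <= d x y.
Proof. by have := metric_triangle x y x; rewrite metric_xx (metric_sym y x); lra. Qed.

Lemma metric_eq0 x y : d x y = 0 -> x = y.
Proof. by case: hd => h _ /h. Qed.

Lemma metric_gt0 x y : x <> y -> 0 < d x y.
Proof.
by move=> xy; rewrite lt_neqAle metric_ge0 andbT eq_sym; apply/eqP => /metric_eq0.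
Qed.

Lemma metric_dist_le x y q : `|d x q - d y q| <= d x y.
Proof.
have := metric_triangle x y q; have := metric_triangle y x q.
by rewrite ler_norml (metric_sym y x); lra.
Qed.

Lemma lipschitz_ge0 f : lipschitz d f ->
  exists2 L, 0 <= L & forall x y, `|f x - f y| <= L * d x y.
Proof.
case=> L hL; exists `|L| => // x y.
by apply: le_trans (hL x y) _; rewrite ler_wpM2r ?metric_ge0 ?ler_norm.
Qed.

Lemma lipschitz_cst v : lipschitz d (fun _ => v).
Proof. by exists 0 => x y; rewrite subrr normr0 mul0r. Qed.

Lemma lipschitzD f g : lipschitz d f -> lipschitz d g ->
  lipschitz d (fun z => f z + g z).
Proof.
move=> [L hL] [L' hL']; exists (L + L') => x y.
rewrite opprD addrACA mulrDl; apply: le_trans (ler_normD _ _) _.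
exact: lerD.
Qed.

Lemma lipschitzZ c f : lipschitz d f -> lipschitz d (fun z => c * f z).
Proof.
move=> [L hL]; exists (`|c| * L) => x y.
by rewrite -mulrBr normrM -mulrA ler_wpM2l.
Qed.

Lemma lipschitzB f g : lipschitz d f -> lipschitz d g ->
  lipschitz d (fun z => f z - g z).
Proof.
move=> hf /(lipschitzZ (-1)) hg.
by under eq_fun do rewrite -mulN1r; exact: lipschitzD.
Qed.

Lemma lipschitz_norm f : lipschitz d f -> lipschitz d (fun z => `|f z|).
Proof. by move=> [L hL]; exists L => x y; apply: le_trans (ler_dist_dist _ _) (hL x y). Qed.

Lemma lipschitz_dist q : lipschitz d (fun z => d z q).
Proof. by exists 1 => x y; rewrite mul1r metric_dist_le. Qed.

Lemma lipschitzM f g Bf Bg : lipschitz d f -> lipschitz d g ->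
  (forall z, `|f z| <= Bf) -> (forall z, `|g z| <= Bg) ->
  lipschitz d (fun z => f z * g z).
Proof.
move=> /lipschitz_ge0 [L L0 hL] /lipschitz_ge0 [L' L'0 hL'] hf hg.
exists (Bf * L' + Bg * L) => x y.
have -> : f x * g x - f y * g y = f x * (g x - g y) + g y * (f x - f y) by ring.
apply: le_trans (ler_normD _ _) _; rewrite mulrDl !normrM -!mulrA.
by apply: lerD; apply: ler_pM.
Qed.

Lemma lipnorm_le f L : 0 <= L ->
  (forall x y, x <> y -> `|f x - f y| <= L * d x y) -> lipnorm d f <= L.
Proof.
move=> L0 hL; rewrite /lipnorm; set S := [set r | _].
have [->|/set0P[r Sr]] := eqVneq S set0; first by rewrite sup0.
apply: ge_sup; first by exists r.
by move=> _ [x [y [xy ->]]]; rewrite ler_pdivrMr ?metric_gt0 ?hL.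
Qed.

Lemma lipnorm_lipschitz f x y : lipschitz d f ->
  `|f x - f y| <= lipnorm d f * d x y.
Proof.
move=> /lipschitz_ge0 [L L0 hL].
have [->|xy] := pselect (x = y); first by rewrite subrr normr0 metric_xx mulr0.
rewrite -ler_pdivrMr ?metric_gt0 //; apply: ub_le_sup; last by exists x, y.
by exists L => _ [a [b [ab ->]]]; rewrite ler_pdivrMr ?metric_gt0.
Qed.

Lemma lipnorm_ge0 f : lipschitz d f -> 0 <= lipnorm d f.
Proof.
move=> /lipschitz_ge0 [L L0 hL]; rewrite /lipnorm; set S := [set r | _].
have [->|/set0P[r Sr]] := eqVneq S set0; first by rewrite sup0.
have hub : has_ubound S.
  by exists L => _ [a [b [ab ->]]]; rewrite ler_pdivrMr ?metric_gt0.
apply: le_trans (ub_le_sup hub Sr).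
by case: Sr => a [b [_ ->]]; rewrite divr_ge0 ?metric_ge0.
Qed.

Variable p : T.

Lemma lipnorm_dist_sub_le q : lipnorm d (fun z => d z q - d p q) <= 1.
Proof.
apply: lipnorm_le => // x y _.
by rewrite opprB addrA subrK mul1r metric_dist_le.
Qed.

Lemma Lip0_0 : Lip0 d p (fun _ => 0).
Proof. by split => //; exact: lipschitz_cst. Qed.

Lemma Lip0D f g : Lip0 d p f -> Lip0 d p g -> Lip0 d p (fun z => f z + g z).
Proof. by move=> [fp hf] [gp hg]; split; [rewrite /= fp gp addr0|exact: lipschitzD]. Qed.

Lemma Lip0Z c f : Lip0 d p f -> Lip0 d p (fun z => c * f z).
Proof. by move=> [fp hf]; split; [rewrite /= fp mulr0|exact: lipschitzZ]. Qed.

Lemma Lip0B f g : Lip0 d p f -> Lip0 d p g -> Lip0 d p (fun z => f z - g z).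
Proof. by move=> [fp hf] [gp hg]; split; [rewrite /= fp gp subr0|exact: lipschitzB]. Qed.

Lemma Lip0_dist : Lip0 d p (fun z => d z p).
Proof. by split; [exact: metric_xx|exact: lipschitz_dist]. Qed.

Lemma Lip0_dist_sub q : Lip0 d p (fun z => d z q - d p q).
Proof. by split; [rewrite subrr|exact/lipschitzB/lipschitz_cst/lipschitz_dist]. Qed.

Lemma Lip0_sum (J : Type) (s : seq J) (F : J -> T -> R) :
  (forall j, Lip0 d p (F j)) -> Lip0 d p (fun z => \sum_(j <- s) F j z).
Proof.
move=> hF; elim: s => [|j s IH].
  by under eq_fun do rewrite big_nil; exact: Lip0_0.
by under eq_fun do rewrite big_cons; exact: Lip0D.
Qed.

Section Bounded.
Variable D : R.
Hypothesis hD : forall z, d z p <= D.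

Lemma Lip0_norm_le f : Lip0 d p f -> forall z, `|f z| <= lipnorm d f * D.
Proof.
move=> [fp hf] z; have := lipnorm_lipschitz z p hf; rewrite fp subr0 => h.
by apply: le_trans h _; rewrite ler_wpM2l ?lipnorm_ge0.
Qed.

Lemma Lip0M f g : Lip0 d p f -> Lip0 d p g -> Lip0 d p (fun z => f z * g z).
Proof.
move=> hf hg; split; first by case: hf => /= -> _; rewrite mul0r.
by apply: lipschitzM (Lip0_norm_le hf) (Lip0_norm_le hg); [case: hf|case: hg].
Qed.

End Bounded.
End Metric.

Section RealInequalities.
Variable R : realType.

Lemma ler_norm_subXX n (M s t : R) : `|s| <= M -> `|t| <= M ->
  `|s ^+ n - t ^+ n| <= n%:R * M ^+ n.-1 * `|s - t|.
Proof.
move=> sM tM; have M0 : 0 <= M := le_trans (normr_ge0 s) sM.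
rewrite subrXX normrM mulrC ler_wpM2r //; apply: le_trans (ler_norm_sum _ _ _) _.
apply: le_trans (ler_sum (G := fun _ => M ^+ n.-1) _ _) _; last first.
  by rewrite sumr_const card_ord mulr_natl.
move=> i _; have hi : (i <= n.-1)%N.
  by rewrite -ltnS prednK ?ltn_ord // (leq_ltn_trans _ (ltn_ord i)).
have -> : M ^+ n.-1 = M ^+ (n.-1 - i) * M ^+ i by rewrite -exprD subnK.
by rewrite normrM !normrX ler_pM ?exprn_ge0 ?lerXn2r ?nnegrE.
Qed.

Lemma ler_norm_div_pow4B (L LG c a b e s t G G' : R) :
  0 < c -> 0 <= L -> 0 <= LG -> 0 < a -> 0 <= b <= a -> 0 <= e ->
  `|s| <= L * a -> `|t| <= L * b -> `|s - t| <= L * e -> `|G - G'| <= LG * e ->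
  c * a ^+ 2 <= G -> c * b ^+ 2 <= G' ->
  `|s ^+ 4 / G - t ^+ 4 / G'| <= (4%:R * L ^+ 4 * a / c + L ^+ 4 * LG / c ^+ 2) * e.
Proof.
move=> c0 L0 LG0 a0 /andP[b0 ba] e0 hs ht hst hG Ga Gb.
have [a0' c0'] := (ltW a0, ltW c0).
have G0 : 0 < G by apply: lt_le_trans Ga; rewrite mulr_gt0 ?exprn_gt0.
have hta : `|t| <= L * a by apply: le_trans ht _; rewrite ler_wpM2l.
have -> : s ^+ 4 / G - t ^+ 4 / G' = (s ^+ 4 - t ^+ 4) / G + t ^+ 4 * (G^-1 - G'^-1).
  by rewrite mulrBr mulrBl addrA subrK.
rewrite [leRHS]mulrDl; apply: le_trans (ler_normD _ _) _; apply: lerD.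
  rewrite normrM normfV (gtr0_norm G0) ler_pdivrMr //.
  apply: le_trans (ler_norm_subXX 4 hs hta) _.
  apply: le_trans (_ : 4%:R * (L * a) ^+ 3 * (L * e) <= _).
    by apply: ler_wpM2l hst; rewrite mulr_ge0 ?ler0n ?exprn_ge0 ?mulr_ge0.
  have -> : 4%:R * (L * a) ^+ 3 * (L * e) = 4%:R * L ^+ 4 * a / c * e * (c * a ^+ 2).
    by field; rewrite gt_eqF.
  by apply: ler_wpM2l Ga; rewrite !mulr_ge0 ?ler0n ?exprn_ge0 ?invr_ge0.
(* For b = 0 the bounds force t = 0, so t^4 / G' = 0 even when G' = 0. *)
have [b0'|bpos] := eqVneq b 0.
  have -> : t = 0 by apply/normr0_eq0/le_anti; rewrite normr_ge0 andbT -(mulr0 L) -b0'.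
  by rewrite expr0n /= mul0r normr0 mulr_ge0 ?divr_ge0 ?mulr_ge0 ?exprn_ge0.
have cb0 : 0 < c * b ^+ 2 by rewrite mulr_gt0 // exprn_gt0 // lt_neqAle eq_sym bpos.
have G'0 : 0 < G' := lt_le_trans cb0 Gb.
have -> : G^-1 - G'^-1 = (G' - G) / (G * G') by field; rewrite !gt_eqF.
rewrite normrM [`|_ / _|]normrM normfV (gtr0_norm (mulr_gt0 G0 G'0)) distrC mulrA.
rewrite ler_pdivrMr ?mulr_gt0 //.
apply: le_trans (_ : (L * b) ^+ 4 * (LG * e) <= _).
  rewrite normrX; apply: ler_pM => //; first exact: exprn_ge0.
  by apply: lerXn2r; rewrite ?nnegrE ?mulr_ge0.
have -> : (L * b) ^+ 4 * (LG * e) =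
    L ^+ 4 * LG / c ^+ 2 * e * ((c * b ^+ 2) * (c * b ^+ 2)).
  by field; rewrite gt_eqF.
apply: ler_wpM2l; first by rewrite !mulr_ge0 ?invr_ge0 ?exprn_ge0.
apply: ler_pM; [exact: ltW|exact: ltW|apply: le_trans Ga|exact: Gb].
by rewrite ler_wpM2l // lerXn2r // nnegrE (le_trans b0).
Qed.

Lemma sumr_gt0_In (J : Type) (s : seq J) (F : J -> R) j :
  (forall i, 0 <= F i) -> List.In j s -> 0 < F j -> 0 < \sum_(i <- s) F i.
Proof.
move=> F0; elim: s => //= i s IH [<-|/IH Fs] Fj; rewrite big_cons.
  by rewrite ltr_pwDl // sumr_ge0.
by rewrite ltr_wpDl // Fs.
Qed.

Lemma sqr_le4_sqrB (x : R) : 4%:R * x ^+ 2 < 1 ->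
  x ^+ 2 <= 4%:R * (x ^+ 2 - x) ^+ 2.
Proof.
move=> hx; have h : 0 <= (2%:R * x - 3%:R) * (2%:R * x - 1) by nra.
nra.
Qed.

End RealInequalities.

Section Pow4Quotient.
Variables (R : realType) (T : Type) (d : T -> T -> R) (p : T) (D : R).
Hypotheses (hd : is_metric d) (hD : forall z, d z p <= D).

Lemma Lip0_pow4_div h G c : 0 < c -> Lip0 d p h -> lipschitz d G ->
  (forall z, c * d z p ^+ 2 <= G z) -> Lip0 d p (fun z => h z ^+ 4 / G z).
Proof.
move=> c0 [hp hl] /(lipschitz_ge0 hd) [LG LG0 hG] Gc.
split; first by rewrite /= hp expr0n mul0r.
pose L := lipnorm d h; have L0 : 0 <= L := lipnorm_ge0 hd hl.
have hb z : `|h z| <= L * d z p.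
  by have := lipnorm_lipschitz hd z p hl; rewrite hp subr0.
pose K := 4%:R * L ^+ 4 * D / c + L ^+ 4 * LG / c ^+ 2.
have key z z' : d z' p <= d z p -> `|h z ^+ 4 / G z - h z' ^+ 4 / G z'| <= K * d z z'.
  move=> zz'; have [zp0|zp] := eqVneq (d z p) 0.
    have /(metric_eq0 hd) -> : d z' p = 0.
      by apply: le_anti; rewrite metric_ge0 // andbT -zp0.
    by rewrite (metric_eq0 hd zp0) subrr normr0 metric_xx // mulr0.
  have a0 : 0 < d z p by rewrite lt_neqAle eq_sym zp metric_ge0.
  have ba : 0 <= d z' p <= d z p by rewrite metric_ge0.
  have hzz' := lipnorm_lipschitz hd z z' hl.
  have := ler_norm_div_pow4B c0 L0 LG0 a0 ba (metric_ge0 hd z z') (hb z) (hb z') hzz'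
    (hG z z') (Gc z) (Gc z').
  move/le_trans; apply; rewrite ler_wpM2r ?metric_ge0 // lerD2r ler_wpM2r ?invr_ge0 ?(ltW c0) //.
  by rewrite ler_wpM2l ?mulr_ge0 ?exprn_ge0.
exists K => x y; have [yx|/ltW xy] := lerP (d y p) (d x p); first exact: key.
by rewrite distrC (metric_sym hd); exact: key.
Qed.

End Pow4Quotient.

Section Compact.
Variables (R : realType) (T : Type) (d : T -> T -> R).
Hypotheses (hd : is_metric d) (hc : mcompact d).

Lemma mopen_gt0 F : lipschitz d F -> mopen d [set z | 0 < F z].
Proof.
move=> /(lipschitz_ge0 hd) [L L0 hL] x /= Fx.
pose r := F x / (L + 1); have r0 : 0 < r by rewrite divr_gt0 //; lra.
have L1 : L + 1 != 0 by rewrite gt_eqF //; lra.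
have Fxr : L * r + r = F x by rewrite /r -[in RHS](divfK L1 (F x)); ring.
exists r; split => // y dxy.
have : L * d x y <= L * r by rewrite ler_wpM2l // ltW.
by have := hL x y; rewrite ler_norml => /andP[_]; lra.
Qed.

Lemma mopenU A B : mopen d A -> mopen d B -> mopen d (A `|` B).
Proof.
move=> hA hB x [/hA|/hB] [r [r0 hr]]; exists r; split => // y /hr; by [left|right].
Qed.

Lemma mcompact_nondecreasing_cover (V : nat -> set T) :
  (forall n, mopen d (V n)) -> (forall z, exists n, V n z) ->
  (forall n m, (n <= m)%N -> V n `<=` V m) -> exists N, forall z, V N z.
Proof.
move=> hV cover hmono; have [s hs] := hc hV cover.
exists (foldr maxn 0%N s) => z; have [j [js Vjz]] := hs z.
apply: hmono Vjz; elim: s js {hs} => //= k s IH [->|/IH]; first exact: leq_maxl.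
by move/leq_trans; apply; exact: leq_maxr.
Qed.

Lemma mcompact_bounded p : exists D, forall z, d z p <= D.
Proof.
pose V n := [set z | 0 < n%:R - d z p].
have [N hN] : exists N, forall z, V N z.
  apply: mcompact_nondecreasing_cover.
  - move=> n; apply/mopen_gt0/lipschitzB; first exact: lipschitz_cst.
    exact: lipschitz_dist.
  - move=> z; exists (Num.Def.archi_bound (d z p)).
    by rewrite /V /= subr_gt0 archi_boundP // metric_ge0.
  - move=> n m nm z; rewrite /V /=; have : n%:R <= m%:R :> R by rewrite ler_nat.
    lra.
by exists N%:R => z; have := hN z; rewrite /V /=; lra.
Qed.

Lemma mcompact_dominated a F G : lipschitz d F -> lipschitz d G ->
  (forall z, a <= F z -> 0 < G z) ->
  exists N : nat, forall z, F z < a \/ F z < N%:R * G z.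
Proof.
move=> hF hG hFG.
pose V n := [set z | 0 < a - F z] `|` [set z | 0 < n%:R * G z - F z].
have [N hN] : exists N, forall z, V N z.
  apply: mcompact_nondecreasing_cover.
  - move=> n; apply: mopenU; apply: mopen_gt0.
      by apply: lipschitzB => //; exact: lipschitz_cst.
    by apply: lipschitzB => //; exact: lipschitzZ.
  - move=> z; have [Fa|aF] := ltrP (F z) a.
      by exists 0%N; left; rewrite /= subr_gt0.
    have G0 := hFG z aF.
    exists (Num.Def.archi_bound (`|F z| / G z)); right.
    rewrite /= subr_gt0 -ltr_pdivrMr //; apply: le_lt_trans (archi_boundP _).
      by rewrite ler_pM2r ?invr_gt0 // ler_norm.
    by rewrite divr_ge0 // ltW.
  - move=> n m nm z [za|]; first by left.
    have [Fa|aF] := ltrP (F z) a; first by left; rewrite /= subr_gt0.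
    move=> /= h; right; apply: lt_le_trans h _.
    by rewrite lerD2r ler_wpM2r ?ler_nat // ltW // hFG.
exists N => z; case: (hN z) => /=; rewrite subr_gt0; by [left|right].
Qed.

Lemma mcompact_coercive p m G : m != 0 -> lipschitz d G ->
  (forall z, z <> p -> 0 < G z) ->
  (forall z, ((m^-1 * d z p) ^+ 2 - m^-1 * d z p) ^+ 2 <= G z) ->
  exists2 c, 0 < c & forall z, c * d z p ^+ 2 <= G z.
Proof.
move=> m0 hG Gpos hv; have m2 : 0 < m ^+ 2 by rewrite exprn_even_gt0.
have [D hD] := mcompact_bounded p.
have hd2 := proj2 (Lip0M hd hD (Lip0_dist hd p) (Lip0_dist hd p)).
have domG z : m ^+ 2 / 4%:R <= d z p * d z p -> 0 < G z.
  have [->|/Gpos//] := pselect (z = p); rewrite (metric_xx hd) mulr0 => h.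
  have : 0 < m ^+ 2 / 4%:R by rewrite divr_gt0 ?ltr0n.
  by rewrite ltNge h.
have [N hN] := mcompact_dominated hd2 hG domG.
have cN : 0 < 4%:R * m ^+ 2 + N%:R by rewrite ltr_wpDr ?ler0n // mulr_gt0 ?ltr0n.
exists (4%:R * m ^+ 2 + N%:R)^-1; rewrite ?invr_gt0 // => z.
rewrite mulrC ler_pdivrMr //; have vG := hv z; set u := m^-1 * d z p in vG *.
have hdu : d z p ^+ 2 = m ^+ 2 * u ^+ 2.
  by rewrite /u exprMn mulrA -exprMn mulfV // expr1n mul1r.
have G0 := le_trans (sqr_ge0 _) vG.
have GN : 0 <= N%:R * G z by rewrite mulr_ge0 ?ler0n.
have mG := mulr_ge0 (ltW m2) G0.
case: (hN z); rewrite -expr2 hdu => hz; last by nra.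
have /sqr_le4_sqrB huv : 4%:R * u ^+ 2 < 1 by nra.
have h1 := ler_wpM2l (ltW m2) huv; have h2 := ler_wpM2l (ltW m2) vG.
nra.
Qed.

End Compact.

Section UltraLimit.
Variables (R : realType) (I : Type) (U : set (set I)).
Hypothesis hU : is_ultrafilter U.

Lemma ultra_superset A B : U A -> A `<=` B -> U B.
Proof. by case: hU => _ [_ [h _]]; apply: h. Qed.

Lemma ultraI A B : U A -> U B -> U (A `&` B).
Proof. by case: hU => _ [_ [_ [h _]]]; apply: h. Qed.

Lemma ultraT : U setT.
Proof. by case: hU => _ []. Qed.

Lemma ultra_nonempty A : U A -> exists i, A i.
Proof.
move=> UA; apply: contrapT => nA; case: hU => U0 _; apply: U0.
by apply: ultra_superset UA _ => i Ai; apply: nA; exists i.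
Qed.

Lemma ultra_setC A : U A \/ U (~` A).
Proof. by case: hU => _ [_ [_ [_]]]. Qed.

Lemma ulimP (a : I -> R) L : ulim U a L <->
  forall e, 0 < e -> U [set i | L - e < a i /\ a i < L + e].
Proof.
split=> h e e0; apply: ultra_superset (h e e0) _ => i /=; rewrite ltr_distl.
  by move/andP.
by move=> [-> ->].
Qed.

Lemma ulim_le (a b : I -> R) A B : (forall i, a i <= b i) ->
  ulim U a A -> ulim U b B -> A <= B.
Proof.
move=> hab /ulimP ha /ulimP hb; rewrite leNgt; apply/negP => BA.
have e0 : 0 < (A - B) / 2 by rewrite divr_gt0 // subr_gt0.
have [i [[h1 _] [_ h2]]] := ultra_nonempty (ultraI (ha _ e0) (hb _ e0)).
by have := hab i; lra.
Qed.

Lemma ulim_unique (a : I -> R) L1 L2 : ulim U a L1 -> ulim U a L2 -> L1 = L2.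
Proof.
move=> h1 h2; apply: le_anti.
by rewrite (ulim_le (fun=> lexx _) h1 h2) (ulim_le (fun=> lexx _) h2 h1).
Qed.

Lemma ulim_cst (v : R) : ulim U (fun _ => v) v.
Proof. by move=> e e0; apply: ultra_superset ultraT _ => i _; rewrite subrr normr0. Qed.

Lemma ulim0_le (a b : I -> R) : (forall i, `|a i| <= b i) -> ulim U b 0 -> ulim U a 0.
Proof.
move=> hab hb e e0; apply: ultra_superset (hb e e0) _ => i /=; rewrite !subr0.
exact/le_lt_trans/(le_trans (hab i))/ler_norm.
Qed.

Lemma ulim_exists (a : I -> R) M : (forall i, `|a i| <= M) -> exists L, ulim U a L.
Proof.
move=> hM; pose S := [set t | U [set i | t <= a i]].
have SM : S (- M).
  by apply: ultra_superset ultraT _ => i _; have := hM i; rewrite ler_norml => /andP[].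
have ubS : ubound S M.
  move=> t /ultra_nonempty [i /= hi]; have := hM i; rewrite ler_norml => /andP[_].
  lra.
have hs : has_sup S by split; [exists (- M) | exists M].
exists (sup S); apply/ulimP => e e0.
have e20 : 0 < e / 2 by rewrite divr_gt0.
have [t St ht] := sup_adherent e20 hs.
have nS : ~ S (sup S + e / 2) by move/(sup_upper_bound hs); lra.
have Uc : U (~` [set i | sup S + e / 2 <= a i]).
  by case: (ultra_setC [set i | sup S + e / 2 <= a i]).
apply: ultra_superset (ultraI St Uc) _ => i /= [h1 /negP h2].
by rewrite -ltNge in h2; split; lra.
Qed.

Lemma ulimD (a b : I -> R) A B : ulim U a A -> ulim U b B ->
  ulim U (fun i => a i + b i) (A + B).
Proof.
move=> /ulimP ha /ulimP hb; apply/ulimP => e e0.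
have e20 : 0 < e / 2 by rewrite divr_gt0.
by apply: ultra_superset (ultraI (ha _ e20) (hb _ e20)) _ => i /= [[? ?] [? ?]]; lra.
Qed.

Lemma ulimB (a b : I -> R) A B : ulim U a A -> ulim U b B ->
  ulim U (fun i => a i - b i) (A - B).
Proof.
move=> ha hb; apply: ulimD ha _ => e e0; apply: ultra_superset (hb e e0) _ => i /=.
by rewrite -opprD normrN.
Qed.

Lemma ulimM (a b : I -> R) A B M : (forall i, `|a i| <= M) ->
  ulim U a A -> ulim U b B -> ulim U (fun i => a i * b i) (A * B).
Proof.
move=> hM ha hb e e0.
have [i0 _] := ultra_nonempty ultraT.
have M0 : 0 <= M := le_trans (normr_ge0 _) (hM i0).
pose r := e / (M + `|B| + 1).
have B0 := normr_ge0 B; have r0 : 0 < r by rewrite divr_gt0 //; lra.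
have hr : M * r + `|B| * r < e.
  have -> : M * r + `|B| * r = e - r by rewrite /r; field; rewrite gt_eqF //; lra.
  lra.
apply: ultra_superset (ultraI (ha _ r0) (hb _ r0)) _ => i /= [h1 h2].
have -> : a i * b i - A * B = a i * (b i - B) + B * (a i - A) by ring.
apply: le_lt_trans (ler_normD _ _) (le_lt_trans _ hr); rewrite !normrM.
by apply: lerD; apply: ler_pM => //; exact: ltW.
Qed.

End UltraLimit.

Section Character.
Variables (R : realType) (K : Type) (dK : K -> K -> R) (k0 : K).
Hypotheses (hd : is_metric dK) (hc : mcompact dK).
Variable chi : (K -> R) -> R.
Hypothesis chiD : forall f g, Lip0 dK k0 f -> Lip0 dK k0 g ->
  chi (fun z => f z + g z) = chi f + chi g.
Hypothesis chiZ : forall c f, Lip0 dK k0 f -> chi (fun z => c * f z) = c * chi f.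
Hypothesis chiM : forall f g, Lip0 dK k0 f -> Lip0 dK k0 g ->
  chi (fun z => f z * g z) = chi f * chi g.

Local Notation Lip0K := (Lip0 dK k0).

Lemma Lip0MK f g : Lip0K f -> Lip0K g -> Lip0K (fun z => f z * g z).
Proof. by have [D hD] := mcompact_bounded hd hc k0; exact: Lip0M. Qed.

Lemma chi0 : chi (fun _ => 0) = 0.
Proof.
rewrite -[RHS](mul0r (chi (fun=> 0))) -chiZ; last exact: Lip0_0.
by congr chi; apply/funext => z; rewrite mul0r.
Qed.

Lemma chiB f g : Lip0K f -> Lip0K g -> chi (fun z => f z - g z) = chi f - chi g.
Proof.
move=> hf hg; rewrite -mulN1r -chiZ // -chiD //; last exact: Lip0Z.
by congr chi; apply/funext => z; rewrite mulN1r.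
Qed.

Lemma chi_sum (J : Type) (s : seq J) (F : J -> K -> R) : (forall j, Lip0K (F j)) ->
  chi (fun z => \sum_(j <- s) F j z) = \sum_(j <- s) chi (F j).
Proof.
move=> hF; elim: s => [|j s IH].
  by rewrite big_nil; under eq_fun do rewrite big_nil; exact: chi0.
under eq_fun do rewrite big_cons.
by rewrite big_cons chiD ?IH //; exact: Lip0_sum.
Qed.

Lemma chiX4 h : Lip0K h -> chi (fun z => h z ^+ 4) = chi h ^+ 4.
Proof.
move=> Lh; have Lh2 := Lip0MK Lh Lh.
have -> : (fun z => h z ^+ 4) = (fun z => (h z * h z) * (h z * h z)).
  by apply/funext => z; ring.
by rewrite !chiM //; ring.
Qed.

Lemma chi_eq0_of_coercive G c : 0 < c -> Lip0K G ->
  (forall z, c * dK z k0 ^+ 2 <= G z) -> chi G = 0 -> forall h, Lip0K h -> chi h = 0.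
Proof.
move=> c0 LG Gc chiG h Lh.
have [D hD] := mcompact_bounded hd hc k0.
have Lq := Lip0_pow4_div hd hD c0 Lh (proj2 LG) Gc.
have h4E : (fun z => h z ^+ 4) = (fun z => G z * (h z ^+ 4 / G z)).
  apply/funext => z; have [G0|G0] := eqVneq (G z) 0; last by rewrite mulrC divfK.
  have /(metric_eq0 hd) zk0 : dK z k0 = 0.
    by apply/eqP; rewrite -sqrf_eq0 eq_le sqr_ge0 andbT -(pmulr_rle0 _ c0) -G0 Gc.
  by rewrite G0 mul0r zk0 (proj1 Lh) expr0n.
have : chi h ^+ 4 = 0 by rewrite -chiX4 // h4E chiM // chiG mul0r.
by move/eqP; rewrite expf_eq0 => /andP[_ /eqP].
Qed.

Lemma chi_null_sum_of_squares u : Lip0K u -> chi u = 1 ->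
  (forall k, exists2 h, Lip0K h & chi h != h k) ->
  exists S, [/\ Lip0K S, chi S = 0, forall z, 0 <= S z & forall z, u z = 1 -> 0 < S z].
Proof.
move=> Lu chiu noeval.
pose J := {j : K -> R | Lip0K j}.
pose w (j : J) z := sval j z - chi (sval j) * u z.
have Lw j : Lip0K (w j) by apply: Lip0B (proj2_sig j) (Lip0Z _ Lu).
have chiw j : chi (w j) = 0.
  by rewrite chiB ?chiZ ?chiu ?mulr1 ?subrr //; [exact: proj2_sig|exact: Lip0Z].
pose V (j : J) := [set z | 0 < `|sval j z - chi (sval j)| + `|u z - 1|].
have [s hs] : exists s : seq J, forall z, exists j, List.In j s /\ V j z.
  apply: hc => [j|z].
    apply: mopen_gt0 => //; apply: lipschitzD; apply: lipschitz_norm; apply: lipschitzB;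
      by [exact: (proj2 (proj2_sig j))|exact: lipschitz_cst|exact: (proj2 Lu)].
  have [u1|u1] := eqVneq (u z) 1.
    have [h Lh hz] := noeval z; exists (exist _ h Lh).
    by rewrite /V /= u1 subrr normr0 addr0 normr_gt0 subr_eq0 eq_sym.
  exists (exist _ _ (Lip0_0 dK k0)); rewrite /V /=.
  by rewrite ltr_wpDl // normr_gt0 subr_eq0.
exists (fun z => \sum_(j <- s) w j z ^+ 2); split.
- by apply: Lip0_sum => j; exact: Lip0MK.
- rewrite chi_sum => [|j]; last exact: Lip0MK.
  by rewrite big1 // => j _; rewrite chiM ?chiw ?mul0r.
- by move=> z; rewrite sumr_ge0 // => j _; rewrite sqr_ge0.
move=> z u1; have [j [js Vjz]] := hs z.
apply: (sumr_gt0_In (fun j => sqr_ge0 (w j z)) js).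
rewrite exprn_even_gt0 //= /w u1 mulr1 subr_eq0.
by move: Vjz; rewrite /V /= u1 subrr normr0 addr0 normr_gt0 subr_eq0.
Qed.

Lemma chi_coercive_null : chi (fun z => dK z k0) != 0 ->
  (forall k, exists2 h, Lip0K h & chi h != h k) ->
  exists G c, [/\ 0 < c, Lip0K G, forall z, c * dK z k0 ^+ 2 <= G z & chi G = 0].
Proof.
set m := chi _ => m0 noeval.
pose u z := m^-1 * dK z k0.
have Lu : Lip0K u by apply: Lip0Z; exact: Lip0_dist.
have chiu : chi u = 1 by rewrite chiZ ?mulVf //; exact: Lip0_dist.
have [S [LS chiS S0 Spos]] := chi_null_sum_of_squares Lu chiu noeval.
pose v z := u z ^+ 2 - u z.
have Lv : Lip0K v by apply: Lip0B => //; exact: Lip0MK.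
have chiv : chi v = 0 by rewrite chiB ?(chiM Lu Lu) ?chiu ?mulr1 ?subrr //; exact: Lip0MK.
pose G z := S z + v z ^+ 2.
have LG : Lip0K G by apply: (Lip0D LS); exact: Lip0MK.
have chiG : chi G = 0.
  by rewrite chiD ?(chiM Lv Lv) ?chiS ?chiv ?mul0r ?addr0 //; exact: Lip0MK.
have Gpos z : z <> k0 -> 0 < G z.
  move=> zk0; have uz : u z != 0 by rewrite mulf_neq0 ?invr_eq0 // gt_eqF ?metric_gt0.
  have [u1|u1] := eqVneq (u z) 1; first by rewrite ltr_pwDl ?Spos ?sqr_ge0.
  rewrite /G; have -> : v z = u z * (u z - 1) by rewrite /v expr2 mulrBr mulr1.
  by rewrite ltr_wpDl ?S0 // exprn_even_gt0 //= mulf_neq0 // subr_eq0.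
have vG z : v z ^+ 2 <= G z by rewrite lerDr.
have [c c0 Gc] := mcompact_coercive hd hc m0 (proj2 LG) Gpos vG.
by exists G, c.
Qed.

Lemma Lip0_character_eval : exists k, forall h, Lip0K h -> chi h = h k.
Proof.
have Ld := Lip0_dist hd k0.
have [m0|m0] := eqVneq (chi (fun z => dK z k0)) 0.
  exists k0 => h Lh; rewrite (proj1 Lh).
  apply: (chi_eq0_of_coercive ltr01 (Lip0MK Ld Ld)) => // [z|]; first by rewrite mul1r.
  by rewrite chiM // m0 mul0r.
apply: contrapT => noeval.
have [k|G [c [c0 LG Gc chiG]]] := chi_coercive_null m0; last first.
  by move: m0; rewrite (chi_eq0_of_coercive c0 LG Gc chiG Ld) eqxx.
apply: contrapT => hk; apply: noeval; exists k => h Lh.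
by apply/eqP; apply: contrapT => /negP hne; apply: hk; exists h.
Qed.

End Character.

Section LipUltraproduct.
Variables (R : realType) (I : Type) (M : I -> Type).
Variables (d : forall i, M i -> M i -> R) (p : forall i, M i) (B0 : R).
Arguments d : clear implicits.
Hypothesis hd : forall i, is_metric (d i).
Hypothesis hB0 : forall i (x y : M i), d i x y <= B0.

Local Notation UP := (in_Lip_ultraproduct d p).

Lemma dist_base_le i (z : M i) : d i z (p i) <= `|B0|.
Proof. exact: le_trans (hB0 z (p i)) (ler_norm B0). Qed.

Lemma UP_lipnorm_bounded f : UP f ->
  exists2 B, 0 <= B & forall i, `|lipnorm (d i) (f i)| <= B.
Proof.
move=> [hf [B hB]]; exists `|B| => // i.
by rewrite ger0_norm ?lipnorm_ge0 ?(le_trans (hB i)) ?ler_norm //; case: (hf i).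
Qed.

Lemma UP_lipschitz f : UP f ->
  exists2 B, 0 <= B & forall i x y, `|f i x - f i y| <= B * d i x y.
Proof.
move=> hf; have [B Bge0 hB] := UP_lipnorm_bounded hf; exists B => // i x y.
apply: le_trans (lipnorm_lipschitz (hd i) x y (proj2 (proj1 hf i))) _.
by rewrite ler_wpM2r ?metric_ge0 // (le_trans (ler_norm _)).
Qed.

Lemma UP_intro f B : 0 <= B -> (forall i, Lip0 (d i) (p i) (f i)) ->
  (forall i x y, `|f i x - f i y| <= B * d i x y) -> UP f.
Proof. by move=> Bge0 hf hB; split => //; exists B => i; apply: lipnorm_le. Qed.

Lemma UP_bounded f : UP f -> exists2 Mf, 0 <= Mf & forall i (z : M i), `|f i z| <= Mf.
Proof.
move=> hf; have [B Bge0 hB] := UP_lipnorm_bounded hf; exists (B * `|B0|) => [|i z].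
  exact: mulr_ge0.
apply: le_trans (Lip0_norm_le (hd i) (@dist_base_le i) (proj1 hf i) z) _.
by rewrite ler_wpM2r // (le_trans (ler_norm _)).
Qed.

Lemma UP_add f g : UP f -> UP g -> UP (fun i z => f i z + g i z).
Proof.
move=> hf hg; have [Bf Bf0 hBf] := UP_lipschitz hf; have [Bg Bg0 hBg] := UP_lipschitz hg.
apply: (@UP_intro _ (Bf + Bg)) => [||i x y]; first exact: addr_ge0.
  by move=> i; apply: Lip0D; [exact: (proj1 hf)|exact: (proj1 hg)].
rewrite opprD addrACA mulrDl; apply: le_trans (ler_normD _ _) _.
exact: lerD.
Qed.

Lemma UP_scale a f : UP f -> UP (fun i z => a * f i z).
Proof.
move=> hf; have [B Bge0 hB] := UP_lipschitz hf.
apply: (@UP_intro _ (`|a| * B)) => [||i x y]; first exact: mulr_ge0.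
  by move=> i; apply: Lip0Z; exact: (proj1 hf).
by rewrite -mulrBr normrM -mulrA ler_wpM2l.
Qed.

Lemma UP_mul f g : UP f -> UP g -> UP (fun i z => f i z * g i z).
Proof.
move=> hf hg; have [Bf Bf0 hBf] := UP_lipschitz hf; have [Bg Bg0 hBg] := UP_lipschitz hg.
have [Mf Mf0 hMf] := UP_bounded hf; have [Mg Mg0 hMg] := UP_bounded hg.
apply: (@UP_intro _ (Mf * Bg + Mg * Bf)) => [||i x y]; first by rewrite addr_ge0 ?mulr_ge0.
  move=> i; apply: (Lip0M (hd i) (@dist_base_le i)); [exact: (proj1 hf)|exact: (proj1 hg)].
have -> : f i x * g i x - f i y * g i y = f i x * (g i x - g i y) + g i y * (f i x - f i y).
  by ring.
apply: le_trans (ler_normD _ _) _; rewrite mulrDl !normrM -!mulrA.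
by apply: lerD; apply: ler_pM.
Qed.

Lemma UP_dist_sub y : UP (fun i z => d i z (y i) - d i (p i) (y i)).
Proof.
apply: (@UP_intro _ 1) => // [i|i x y']; first exact: Lip0_dist_sub.
by rewrite opprB addrA subrK mul1r metric_dist_le.
Qed.

Section AlgebraIso.
Variables (K : Type) (dK : K -> K -> R) (k0 : K) (U : set (set I)).
Hypotheses (hdK : is_metric dK) (hK : mcompact dK) (hU : is_ultrafilter U).
Variables (T : (forall i, M i -> R) -> K -> R) (c C : R).
Hypothesis T_Lip0 : forall f, UP f -> Lip0 dK k0 (T f).
Hypothesis TD : forall f g, UP f -> UP g ->
  T (fun i x => f i x + g i x) = (fun k => T f k + T g k).
Hypothesis TZ : forall a f, UP f -> T (fun i x => a * f i x) = (fun k => a * T f k).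
Hypothesis TM : forall f g, UP f -> UP g ->
  T (fun i x => f i x * g i x) = (fun k => T f k * T g k).
Hypothesis T_onto : forall h, Lip0 dK k0 h -> exists f, UP f /\ T f = h.
Hypotheses (c_gt0 : 0 < c) (C_gt0 : 0 < C).
Hypothesis T_norm : forall f, UP f -> forall L,
  ulim U (fun i => lipnorm (d i) (f i)) L ->
  c * L <= lipnorm dK (T f) /\ lipnorm dK (T f) <= C * L.

Lemma T_lipnorm f : UP f -> exists N, [/\ ulim U (fun i => lipnorm (d i) (f i)) N,
  0 <= N, c * N <= lipnorm dK (T f) & lipnorm dK (T f) <= C * N].
Proof.
move=> hf; have [B _ hB] := UP_lipnorm_bounded hf; have [N hN] := ulim_exists hU hB.
have [cN NC] := T_norm hf hN; exists N; split => //.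
apply: (ulim_le hU _ (ulim_cst hU 0) hN) => i.
by case: (proj1 hf i) => _; apply: lipnorm_ge0.
Qed.

Lemma T_inj_pointwise f g : UP f -> UP g -> T f = T g ->
  forall x : forall i, M i, ulim U (fun i => f i (x i) - g i (x i)) 0.
Proof.
move=> hf hg Tfg x; pose h i z := f i z + -1 * g i z.
have hh : UP h by apply: UP_add hf (UP_scale _ hg).
have Th : T h = fun=> 0.
  by rewrite TD ?TZ ?Tfg //; [apply/funext => k; ring|exact: UP_scale].
have [N [hN N0 cN _]] := T_lipnorm hh.
have N00 : N = 0.
  apply: le_anti; rewrite N0 andbT -(pmulr_rle0 _ c_gt0); apply: le_trans cN _.
  by rewrite Th; apply: lipnorm_le => // *; rewrite subrr normr0 mul0r.
apply: (ulim0_le hU (b := fun i => `|B0| * lipnorm (d i) (h i))).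
  move=> i; have -> : f i (x i) - g i (x i) = h i (x i) by rewrite /h mulN1r.
  rewrite mulrC; exact: (Lip0_norm_le (hd i) (@dist_base_le i) (proj1 hh i) (x i)).
rewrite -(mulr0 `|B0|) -N00.
exact: (ulimM hU (fun=> lexx `| `|B0| |) (ulim_cst hU _) hN).
Qed.

Lemma T_eval_point (x : forall i, M i) :
  exists k, forall f, UP f -> ulim U (fun i => f i (x i)) (T f k).
Proof.
have hchi h : exists v, forall f, UP f -> T f = h -> ulim U (fun i => f i (x i)) v.
  have [[f0 [hf0 <-]]|nf] := pselect (exists f0, UP f0 /\ T f0 = h); last first.
    by exists 0 => f hf Tf; exfalso; apply: nf; exists f.
  have [Mb _ hMb] := UP_bounded hf0; have [v hv] := ulim_exists hU (fun i => hMb i (x i)).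
  exists v => f hf Tf; have := ulimD hU (T_inj_pointwise hf hf0 Tf x) hv.
  by rewrite add0r; congr ulim; apply/funext => i; rewrite subrK.
have [chi chiP] := choice hchi.
have chiT f : UP f -> ulim U (fun i => f i (x i)) (chi (T f)) by move=> hf; exact: chiP.
have [k hk] : exists k, forall h, Lip0 dK k0 h -> chi h = h k.
  apply: (Lip0_character_eval hdK hK (chi := chi)).
  - move=> _ _ /T_onto[f [hf <-]] /T_onto[g [hg <-]]; rewrite -TD //.
    exact: (ulim_unique hU (chiT _ (UP_add hf hg)) (ulimD hU (chiT _ hf) (chiT _ hg))).
  - move=> a _ /T_onto[f [hf <-]]; rewrite -TZ //.
    apply: (ulim_unique hU (chiT _ (UP_scale a hf))).
    exact: (ulimM hU (fun=> lexx `|a|) (ulim_cst hU a) (chiT _ hf)).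
  - move=> _ _ /T_onto[f [hf <-]] /T_onto[g [hg <-]]; rewrite -TM //.
    have [Mf _ hMf] := UP_bounded hf; apply: (ulim_unique hU (chiT _ (UP_mul hf hg))).
    exact: (ulimM hU (fun i => hMf i (x i)) (chiT _ hf) (chiT _ hg)).
by exists k => f hf; rewrite -hk; [exact: chiT|exact: T_Lip0].
Qed.

Variable phi : (forall i, M i) -> K.
Hypothesis phiP : forall x f, UP f -> ulim U (fun i => f i (x i)) (T f (phi x)).

Lemma T_dist_lower x y L : ulim U (fun i => d i (x i) (y i)) L ->
  L <= C * dK (phi x) (phi y).
Proof.
move=> hL; pose g i z := d i z (y i) - d i (p i) (y i).
have hg : UP g := UP_dist_sub y.
have [N [hN _ _ CN]] := T_lipnorm hg.
have N1 : N <= 1.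
  apply: (ulim_le hU _ hN (ulim_cst hU 1)) => i; exact: lipnorm_dist_sub_le.
have -> : L = T g (phi x) - T g (phi y).
  apply: (ulim_unique hU hL); have := ulimB hU (phiP x hg) (phiP y hg).
  by congr ulim; apply/funext => i; rewrite /g metric_xx // opprB addrA subrK subr0.
apply: le_trans (ler_norm _) _.
apply: le_trans (lipnorm_lipschitz hdK _ _ (proj2 (T_Lip0 hg))) _.
by rewrite ler_wpM2r ?metric_ge0 // (le_trans CN) // ler_piMr // ltW.
Qed.

Lemma T_dist_upper x y L : ulim U (fun i => d i (x i) (y i)) L ->
  c * dK (phi x) (phi y) <= L.
Proof.
move=> hL; have L0 : 0 <= L.
  by apply: (ulim_le hU _ (ulim_cst hU 0) hL) => i; exact: metric_ge0.
have [f [hf Tf]] := T_onto (Lip0_dist_sub hdK k0 (phi y)).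
have [N [hN N0 cN _]] := T_lipnorm hf.
have cN1 : c * N <= 1 by apply: le_trans cN _; rewrite Tf lipnorm_dist_sub_le.
have [B _ hB] := UP_lipnorm_bounded hf.
have hxy := ulimB hU (phiP x hf) (phiP y hf).
rewrite Tf metric_xx // opprB addrA subrK subr0 in hxy.
have dN : dK (phi x) (phi y) <= N * L.
  apply: (ulim_le hU _ hxy (ulimM hU hB hN hL)) => i.
  exact: (le_trans (ler_norm _) (lipnorm_lipschitz (hd i) _ _ (proj2 (proj1 hf i)))).
apply: le_trans (ler_wpM2l (ltW c_gt0) dN) _.
by rewrite mulrA ler_piMl.
Qed.

End AlgebraIso.

End LipUltraproduct.

Theorem proposition6p4 (R : realType)
    (K : Type) (dK : K -> K -> R) (k0 : K)
    (I : Type) (U : set (set I))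
    (M : I -> Type) (d : forall i, M i -> M i -> R) (p : forall i, M i) :
  is_metric dK -> mcompact dK ->
  is_ultrafilter U ->
  (forall i, is_metric (d i)) ->
  (exists B : R, forall i (x y : M i), d i x y <= B) ->
  (exists T : (forall i, M i -> R) -> (K -> R),
      lip_ultraproduct_algebra_iso U d p dK k0 T) ->
  exists (phi : (forall i, M i) -> K) (a b : R), 0 < a /\ 0 < b /\
    forall (x y : forall i, M i) (L : R),
      ulim U (fun i => d i (x i) (y i)) L ->
      a * L <= dK (phi x) (phi y) /\ dK (phi x) (phi y) <= b * L.
Proof.
move=> hdK hK hU hd [B0 hB0] [T [T_Lip0 [TD [TZ [TM [T_onto [c [C [c0 [C0 T_norm]]]]]]]]]].
have [phi phiP] := choice (T_eval_point hd hB0 hdK hK hU T_Lip0 TD TZ TM T_onto c0 T_norm).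
exists phi, C^-1, c^-1; rewrite !invr_gt0; do 2!split => //; move=> x y L hL; split.
  by rewrite mulrC ler_pdivrMr // mulrC (T_dist_lower hd hdK hU T_Lip0 C0 T_norm phiP hL).
by rewrite ler_pdivlMl // (T_dist_upper hd hdK hU T_onto c0 T_norm phiP hL).
Qed.
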